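(* Consider the uncoded caching problem: maximize $G(X)=\sum_{u=1}^U(\omega_{0,u}-\bar D_u)$ over sets $X\subseteq S=\{s_f^h: 1\le f\le F,\ 1\le h\le H\}$ satisfying $|X\cap S_h|\le M$ for all $h=1,\dots,H$, where $S_h=\{s_1^h,\dots,s_F^h\}$ and $X$ corresponds to the placement matrix $x_{f,h}=\mathbf{1}[s_f^h\in X]$, and $$\bar D_u=\sum_{j=1}^{|\mathcal{H}(u)|-1}\omega_{(j)_u,u}\sum_{f=1}^F\Big[\prod_{i=1}^{j-1}(1-x_{f,(i)_u})\Big]x_{f,(j)_u}P_f+\omega_{0,u}\sum_{f=1}^F\Big[\prod_{i=1}^{|\mathcal{H}(u)|-1}(1-x_{f,(i)_u})\Big]P_f.$$ The greedy algorithm, which starts from $X=\emptyset$ and repeatedly adds to $X$ an element $s\in S\setminus X$ with the largest marginal value $G(X\cup\{s\})-G(X)$ among those with $X\cup\{s\}$ still feasible, stopping when no feasible element can be added or the largest marginal value is zero, outputs a feasible $X_{\rm greedy}$ with $G(X_{\rm greedy})\ge \tfrac12\max\{G(X): X \text{ feasible}\}$.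
   Context: Setting: helpers $\{0,1,\dots,H\}$, where helper $0$ is the base station; users $\{1,\dots,U\}$; files $\{1,\dots,F\}$ with request probabilities $P_f\ge0$ summing to $1$; each helper $h\ge1$ has cache capacity $M$ files. A bipartite graph with edge set $\mathcal{E}$ between helpers and users, with $(0,u)\in\mathcal{E}$ for all $u$; $\mathcal{H}(u)=\{h:(h,u)\in\mathcal{E}\}$. Nonnegative reals $\omega_{h,u}$ (per-bit download delays) satisfy $\omega_{0,u}\ge\omega_{h,u}$ for $(h,u)\in\mathcal{E}$, and $\omega_{h,u}=\omega_\infty$ (a constant much larger than $\max_u\omega_{0,u}$) for $(h,u)\notin\mathcal{E}$. $(j)_u$ denotes the helper of $\mathcal{H}(u)$ with the $j$-th smallest delay to $u$, ordered so that $(|\mathcal{H}(u)|)_u=0$. Empty products equal $1$ and empty sums equal $0$. *)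

From HB Require Import structures.
From mathcomp Require Import all_boot all_order all_algebra.
Set Implicit Arguments. Unset Strict Implicit. Unset Printing Implicit Defensive.
Import Order.TTheory GRing.Theory Num.Theory.
Local Open Scope ring_scope.

(* Helpers are 'I_H.+1 (helper ord0 = base station), users 'I_U, files 'I_F.
   The ground set S = {s_f^h : h >= 1} is encoded as pairs (f, h) with h != ord0. *)

Section Caching.
Variables (R : realFieldType) (H U F : nat).
Variable P : 'I_F -> R.
Variable omega : 'I_H.+1 -> 'I_U -> R.
(* hs u = [(1)_u; ...; (|H(u)|-1)_u] : the non-base-station helpers connected
   to u, ordered by nondecreasing delay; (|H(u)|)_u = 0 is the base station. *)
Variable hs : 'I_U -> seq 'I_H.+1.

Definition Sset : {set 'I_F * 'I_H.+1} := [set p | p.2 != ord0].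

Definition xfh (X : {set 'I_F * 'I_H.+1}) (f : 'I_F) (h : 'I_H.+1) : R :=
  ((f, h) \in X)%:R.

Definition Dbar (X : {set 'I_F * 'I_H.+1}) (u : 'I_U) : R :=
  \sum_(j < size (hs u))
     omega (nth ord0 (hs u) j) u *
       \sum_(f < F) ((\prod_(i < j) (1 - xfh X f (nth ord0 (hs u) i)))
                      * xfh X f (nth ord0 (hs u) j) * P f)
  + omega ord0 u *
       \sum_(f < F) ((\prod_(i < size (hs u)) (1 - xfh X f (nth ord0 (hs u) i))) * P f).

Definition Gobj (X : {set 'I_F * 'I_H.+1}) : R :=
  \sum_(u < U) (omega ord0 u - Dbar X u).

Variable M : nat.

Definition feasible (X : {set 'I_F * 'I_H.+1}) : bool :=
  (X \subset Sset) &&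
  [forall h : 'I_H.+1, (h != ord0) ==> (#|[set f | (f, h) \in X]| <= M)%N].

Definition can_add (X : {set 'I_F * 'I_H.+1}) (s : 'I_F * 'I_H.+1) : bool :=
  [&& s \notin X, s \in Sset & feasible (s |: X)].

Definition gain (X : {set 'I_F * 'I_H.+1}) (s : 'I_F * 'I_H.+1) : R :=
  Gobj (s |: X) - Gobj X.

Inductive greedy_reach : {set 'I_F * 'I_H.+1} -> Prop :=
| greedy_start : greedy_reach set0
| greedy_step X s : greedy_reach X -> can_add X s ->
    (forall t, can_add X t -> gain X t <= gain X s) ->
    0 < gain X s -> greedy_reach (s |: X).

Definition greedy_output (X : {set 'I_F * 'I_H.+1}) : Prop :=
  greedy_reach X /\ forall s, can_add X s -> gain X s <= 0.

End Caching.

(* For each user u and file f, the delay saving [omega_0 - delay] is the saving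
   of the fastest helper in hs u caching f, so G is a nonnegative combination of
   "maximum weight present" functions: monotone, submodular and zero at the empty
   set.  The feasible placements form a partition matroid (at most M files per
   helper).  Compare the greedy output Xg with a feasible Y: by submodularity
   G Y <= G Xg + sum of the gains of Y \ Xg at Xg; the elements still addable
   have gain <= 0 when greedy stops, and the blocked ones lie at full helpers,
   so they can be matched to greedy steps at the same helper whose gains dominate
   theirs. *)

From Pilot Require Import Defs.
From HB Require Import structures.
From mathcomp Require Import all_boot all_order all_algebra.
From mathcomp Require Import ring lra zify.
Import Order.TTheory GRing.Theory Num.Theory.
Set Implicit Arguments. Unset Strict Implicit. Unset Printing Implicit Defensive.
Local Open Scope ring_scope.

Lemma maxBr_nonincreasing (R : realDomainType) (d a c : R) :
  a <= c -> Num.max d c - c <= Num.max d a - a.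
Proof. by move=> le_ac; rewrite !maxEle; case: (leP d c); case: (leP d a); lra. Qed.

Section Saving.
Variables (R : realDomainType) (T : eqType) (om0 : R) (om : T -> R).

Fixpoint saving (b : pred T) (s : seq T) : R :=
  if s is h :: s' then (if b h then om0 - om h else saving b s') else 0.

Lemma eq_saving (b1 b2 : pred T) s : b1 =1 b2 -> saving b1 s = saving b2 s.
Proof. by move=> eqb; elim: s => //= h s ->; rewrite eqb. Qed.

Lemma saving_pred0 s : saving pred0 s = 0.
Proof. by elim: s. Qed.

Lemma saving_le (b : pred T) s c :
  0 <= c -> {in s, forall x, om0 - om x <= c} -> saving b s <= c.
Proof.
move=> c_ge0; elim: s => //= h s IHs le_c.
case: (b h); first by apply: le_c; rewrite mem_head.
by apply: IHs => x xs; apply: le_c; rewrite inE xs orbT.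
Qed.

Variable s : seq T.
Hypothesis om_le_om0 : {in s, forall x, om x <= om0}.
Hypothesis s_sorted : sorted (fun a b => om a <= om b) s.

(* Along a list sorted by delay, the first cached helper is the fastest one,
   so [saving b s] is the largest of the savings [om0 - om h] with [b h]. *)
Lemma saving_predU (d b : pred T) :
  saving (predU d b) s = Num.max (saving d s) (saving b s).
Proof.
elim: s om_le_om0 s_sorted => //= [|h s' IHs] le0 sorted_s; first by rewrite maxxx.
have le0' : {in s', forall x, om x <= om0}.
  by move=> x xs; apply: le0; rewrite inE xs orbT.
have head_max b' : saving b' s' <= om0 - om h.
  apply: saving_le => [|x xs]; first by have := le0 h (mem_head _ _); lra.
  have le_om : transitive (fun a b => om a <= om b) by move=> ? ? ?; apply: le_trans.
  have /allP/(_ x xs) := order_path_min le_om sorted_s.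
  lra.
case: (d h); case: (b h) => /=; first by rewrite maxxx.
- by rewrite max_l.
- by rewrite max_r.
- exact: IHs (path_sorted sorted_s).
Qed.

Lemma saving_sub (b1 b2 : pred T) : subpred b1 b2 -> saving b1 s <= saving b2 s.
Proof.
move=> sub12; rewrite -(eq_saving s (_ : predU b1 b2 =1 b2)) ?saving_predU ?le_max ?lexx ?orbT //.
by move=> x /=; case: (boolP (b1 x)) => // /sub12 ->.
Qed.

End Saving.

Arguments eq_saving {R T om0 om b1 b2} s.

Section ExpectedDelay.
Variables (R : comPzRingType) (T : Type) (t0 : T) (om0 : R) (om : T -> R).

Definition expected_delay (x : T -> R) (s : seq T) : R :=
  \sum_(j < size s) om (nth t0 s j) *
     ((\prod_(i < j) (1 - x (nth t0 s i))) * x (nth t0 s j))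
  + om0 * \prod_(i < size s) (1 - x (nth t0 s i)).

Lemma expected_delay_cons x h s :
  expected_delay x (h :: s) = om h * x h + (1 - x h) * expected_delay x s.
Proof.
rewrite /expected_delay /= !big_ord_recl /= big_ord0 mul1r mulrDr mulr_sumr.
under eq_bigr => j _ do rewrite big_ord_recl /=.
rewrite -!addrA; congr (_ + (_ + _)); last exact: mulrCA.
by apply: eq_bigr => j _; rewrite -[(1 - x h) * _ * _]mulrA mulrCA.
Qed.

End ExpectedDelay.

Lemma expected_delay_indicator (R : realDomainType) (T : eqType) t0 (om0 : R) om
    (b : pred T) s :
  om0 - expected_delay t0 om0 om (fun h => (b h)%:R) s = saving om0 om b s.
Proof.
elim: s => [|h s IHs]; first by rewrite /expected_delay !big_ord0 mulr1 add0r subrr.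
by rewrite expected_delay_cons /= -IHs; case: (b h) => /=; ring.
Qed.

Section Caching.
Variables (R : realFieldType) (H U F M : nat).
Variables (P : 'I_F -> R) (omega : 'I_H.+1 -> 'I_U -> R) (hs : 'I_U -> seq 'I_H.+1).
Hypothesis P_ge0 : forall f, 0 <= P f.
Hypothesis P_sum1 : \sum_(f < F) P f = 1.
Hypothesis omega_le_base : forall u, {in hs u, forall h, omega h u <= omega ord0 u}.
Hypothesis hs_sorted : forall u, sorted (fun a b => omega a u <= omega b u) (hs u).

Local Notation G := (Gobj P omega hs).
Local Notation gain := (gain P omega hs).
Local Notation T := ('I_F * 'I_H.+1)%type.

Definition cached (X : {set T}) (f : 'I_F) : pred 'I_H.+1 := [pred h | (f, h) \in X].

Lemma Dbar_expected_delay (X : {set T}) u : Dbar P omega hs X u =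
  \sum_(f < F) P f * expected_delay ord0 (omega ord0 u) (omega^~ u) (xfh R X f) (hs u).
Proof.
under [RHS]eq_bigr => f _ do rewrite /expected_delay mulrDr mulr_sumr.
rewrite big_split /= exchange_big /=; congr (_ + _).
  by apply: eq_bigr => j _; rewrite mulr_sumr; apply: eq_bigr => f _; ring.
by rewrite mulr_sumr; apply: eq_bigr => f _; ring.
Qed.

Lemma GobjE (X : {set T}) : G X =
  \sum_(u < U) \sum_(f < F) P f * saving (omega ord0 u) (omega^~ u) (cached X f) (hs u).
Proof.
apply: eq_bigr => u _; rewrite Dbar_expected_delay.
under [RHS]eq_bigr => f _ do rewrite -(expected_delay_indicator ord0) mulrBr.
by rewrite sumrB -mulr_suml P_sum1 mul1r.
Qed.

Lemma Gobj_set0 : G set0 = 0.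
Proof.
rewrite GobjE big1 // => u _; rewrite big1 // => f _.
by rewrite (@eq_saving _ _ _ _ _ pred0 _) ?saving_pred0 ?mulr0 // => h; rewrite /cached /= inE.
Qed.

Lemma le_Gobj (X W : {set T}) : X \subset W -> G X <= G W.
Proof.
move=> sXW; rewrite !GobjE; apply: ler_sum => u _; apply: ler_sum => f _.
apply: ler_wpM2l => //; apply: saving_sub => // h; exact: (subsetP sXW).
Qed.

Lemma gain_ge0 (X : {set T}) (z : T) : 0 <= gain X z.
Proof. by rewrite subr_ge0 le_Gobj // subsetUr. Qed.

Lemma le_gain (X W : {set T}) (z : T) : X \subset W -> gain W z <= gain X z.
Proof.
move=> sXW; rewrite /Defs.gain !GobjE -!sumrB; apply: ler_sum => u _.
rewrite -!sumrB; apply: ler_sum => f _; rewrite -!mulrBr; apply: ler_wpM2l => //.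
have cachedU1 Y : cached (z |: Y) f =1 predU (cached [set z] f) (cached Y f).
  by move=> h; rewrite /cached /= !inE.
rewrite !(eq_saving _ (cachedU1 _)) !saving_predU //.
by apply/maxBr_nonincreasing/saving_sub => // h; apply: (subsetP sXW).
Qed.

Lemma Gobj_setU_le (A B : {set T}) : G (A :|: B) <= G A + \sum_(b in B) gain A b.
Proof.
rewrite -{1}(set_enum B) -big_enum; elim: (enum B) => [|b s IHs].
  by rewrite big_nil addr0 le_Gobj // subUset subxx; apply/subsetP => x; rewrite inE.
have -> : A :|: [set x in b :: s] = b |: (A :|: [set x in s]).
  by apply/setP => x; rewrite !inE orbCA.
have := le_gain b (subsetUl A [set x in s]).
rewrite big_cons /Defs.gain in IHs * => le_b; rewrite addrA.
lra.
Qed.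

Definition load (X : {set T}) (h : 'I_H.+1) : nat := #|[set f | (f, h) \in X]|.

Lemma load_setU1 (X : {set T}) z h :
  load (z |: X) h = (load X h + ((z.2 == h) && (z \notin X)))%N.
Proof.
case: z => f0 h0; rewrite /load /=; case: eqP => [<- | /eqP ne_h].
  have -> : [set f | (f, h0) \in (f0, h0) |: X] = f0 |: [set f | (f, h0) \in X].
    by apply/setP => f; rewrite !inE xpair_eqE eqxx andbT.
  by rewrite cardsU1 inE addnC.
by rewrite addn0; apply: eq_card => f; rewrite !inE xpair_eqE (eq_sym h) (negbTE ne_h) andbF.
Qed.

Lemma load_setD1 (Z : {set T}) z h : z \in Z ->
  load Z h = (load (Z :\ z) h + (z.2 == h))%N.
Proof.
by move=> zZ; rewrite -{1}(setD1K zZ) load_setU1 setD11 andbT.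
Qed.

Lemma subset_load (Z Y : {set T}) h : Z \subset Y -> (load Z h <= load Y h)%N.
Proof.
move=> sZY; apply/subset_leq_card/subsetP => f; rewrite !inE; exact: (subsetP sZY).
Qed.

Lemma load_eq0 (Z : {set T}) h : {in Z, forall z, z.2 != h} -> load Z h = 0%N.
Proof.
by move=> Zh; apply: eq_card0 => f; rewrite !inE; apply/negP => /Zh; rewrite eqxx.
Qed.

Lemma load_set0 h : load set0 h = 0%N.
Proof. by rewrite load_eq0 // => z; rewrite inE. Qed.

Lemma feasibleP (X : {set T}) :
  reflect (X \subset Sset H F /\ forall h, h != ord0 -> (load X h <= M)%N) (feasible M X).
Proof.
apply: (iffP andP) => [[sXS /forallP lXM] | [sXS lXM]]; split => //.
  by move=> h h0; have /implyP := lXM h; apply.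
by apply/forallP => h; apply/implyP/lXM.
Qed.

Lemma can_addE (X : {set T}) z : feasible M X ->
  can_add M X z = [&& z \notin X, z.2 != ord0 & (load X z.2 < M)%N].
Proof.
move=> /feasibleP [sXS lXM]; rewrite /can_add inE.
apply/and3P/and3P => [[zX z0 /feasibleP [_ lzXM]] | [zX z0 lt_M]]; split => //.
  by have := lzXM _ z0; rewrite load_setU1 eqxx zX addn1.
apply/feasibleP; split; first by rewrite subUset sub1set inE z0.
move=> h h0; rewrite load_setU1 zX andbT.
by case: eqP => [<- | _]; rewrite ?addn1 ?addn0 ?lXM.
Qed.

Lemma greedy_reach_feasible (X : {set T}) : greedy_reach P omega hs M X -> feasible M X.
Proof.
case=> [|X' s _ /and3P [_ _ //] _ _].
apply/feasibleP; split=> [|h _]; first exact: sub0set.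
by rewrite load_set0.
Qed.

(* Induction along the greedy run: each element of Z is charged to a distinct
   greedy step at the same helper, where it was still addable, so its gain is
   dominated by that step's gain (greedy choice, then submodularity). *)
Lemma greedy_reach_bound (X : {set T}) : greedy_reach P omega hs M X ->
  forall Z W : {set T}, Z \subset Sset H F -> [disjoint Z & X] -> X \subset W ->
  (forall h, load Z h <= load X h)%N -> \sum_(z in Z) gain W z <= G X.
Proof.
move=> reachX0; elim: X / reachX0 => [|X s reachX IHX add_s max_s _] Z W sZS dZX sXW lZX.
  rewrite Gobj_set0 big_pred0 // => z; apply/negP => zZ.
  by have := lZX z.2; rewrite (load_setD1 _ zZ) eqxx addn1 load_set0.
have fX := greedy_reach_feasible reachX.
have [sX _ _] := and3P add_s.
have sXW' : X \subset W := subset_trans (subsetUr _ _) sXW.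
have dZX' : [disjoint Z & X] := disjointWr (subsetUr _ _) dZX.
have <- : G X + gain X s = G (s |: X) by rewrite /Defs.gain addrC subrK.
case: (pickP [pred z in Z | z.2 == s.2]) => [z /andP [zZ /eqP zs] | noZs].
  rewrite (big_setD1 z zZ) [G X + _]addrC; apply: lerD.
    have add_z : can_add M X z.
      rewrite can_addE // (disjointFr dZX') //= zs.
      by move: add_s; rewrite can_addE // => /and3P [_ -> ->].
    exact: le_trans (le_gain z sXW') (max_s z add_z).
  apply: IHX => //; first exact: subset_trans (subsetDl _ _) sZS.
    exact: disjointWl (subsetDl _ _) dZX'.
  move=> h; have := lZX h; rewrite (load_setD1 _ zZ) load_setU1 zs sX andbT.
  by case: (s.2 == h) => /=; lia.
rewrite -[X in X <= _]addr0; apply: lerD; last exact: gain_ge0.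
apply: IHX => // h; case: (eqVneq s.2 h) => [<- | ne_h].
  by rewrite load_eq0 // => z zZ; have := noZs z; rewrite /= zZ => /negbT.
by have := lZX h; rewrite load_setU1 (negbTE ne_h) addn0.
Qed.

Lemma greedy_output_exists : exists Xg, greedy_output P omega hs M Xg.
Proof.
suff ext n X : greedy_reach P omega hs M X -> (#|Sset H F :\: X| <= n)%N ->
    exists Xg, greedy_output P omega hs M Xg.
  exact: ext (greedy_start _ _ _ _) (leqnn _).
elim: n X => [|n IHn] X reachX le_n.
  exists X; split=> // s /and3P [sX sS _].
  by move: le_n; rewrite (cardsD1 s) in_setD sX sS.
have [t /andP [add_t pos_t] | no_pos] := pickP [pred t | can_add M X t && (0 < gain X t)].
  case: (real_arg_maxP (F := gain X) add_t (fun t _ => num_real (gain X t))) => s add_s max_s.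
  have [sX sS _] := and3P add_s.
  apply: (IHn (s |: X)); first exact: greedy_step (lt_le_trans pos_t (max_s t add_t)).
  by rewrite setUC -setDDl; move: le_n; rewrite (cardsD1 s) in_setD sX sS.
exists X; split=> // s add_s.
by have := no_pos s; rewrite /= add_s /= leNgt => ->.
Qed.

Lemma load_blocked_le (X Y Z : {set T}) : feasible M X -> feasible M Y -> Z \subset Y ->
  {in Z, forall z, (z \notin X) && ~~ can_add M X z} ->
  forall h, (load Z h <= load X h)%N.
Proof.
move=> fX /feasibleP [sYS lYM] sZY blockedZ h.
have [z /andP [zZ /eqP <-] | noZh] := pickP [pred z in Z | z.2 == h]; last first.
  by rewrite load_eq0 // => z zZ; have := noZh z; rewrite /= zZ => /negbT.
have [zX not_add_z] := andP (blockedZ z zZ).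
have z0 : z.2 != ord0 by have := subsetP sYS z (subsetP sZY z zZ); rewrite inE.
have full : (M <= load X z.2)%N by move: not_add_z; rewrite can_addE // zX z0 -leqNgt.
exact: leq_trans (subset_load _ sZY) (leq_trans (lYM _ z0) full).
Qed.

Lemma greedy_output_half (Xg Y : {set T}) :
  greedy_output P omega hs M Xg -> feasible M Y -> G Y / 2 <= G Xg.
Proof.
move=> [reachXg stop] fY; have fXg := greedy_reach_feasible reachXg.
set B := Y :\: Xg; set Z := [set z in B | ~~ can_add M Xg z].
have le_B : G Y <= G Xg + \sum_(z in B) gain Xg z.
  apply: le_trans (Gobj_setU_le _ _); apply/le_Gobj/subsetP => y yY.
  by rewrite /B !inE yY andbT orbN.
have le_Z : \sum_(z in B) gain Xg z <= \sum_(z in Z) gain Xg z.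
  rewrite (bigID (can_add M Xg)) /= -[X in _ <= X]add0r; apply: lerD.
    by apply: sumr_le0 => z /andP [_]; apply: stop.
  by rewrite (eq_bigl (fun z => z \in Z)) ?lexx // => z; rewrite !inE.
have le_G : \sum_(z in Z) gain Xg z <= G Xg.
  have sZY : Z \subset Y by apply/subsetP => z; rewrite !inE => /andP [/andP [_ ->]].
  have /feasibleP [sYS _] := fY.
  apply: greedy_reach_bound => //; first exact: subset_trans sZY sYS.
    by rewrite disjoint_subset; apply/subsetP => z; rewrite !inE => /andP [/andP [->]].
  by apply: (load_blocked_le fXg fY sZY) => z; rewrite !inE => /andP [/andP [-> _] ->].
lra.
Qed.

End Caching.

Theorem mainTheorem4 (R : realFieldType) (H U F M : nat)
  (P : 'I_F -> R) (E : 'I_H.+1 -> 'I_U -> bool)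
  (omega : 'I_H.+1 -> 'I_U -> R) (omega_inf : R)
  (hs : 'I_U -> seq 'I_H.+1) :
  (forall f, 0 <= P f) ->
  \sum_(f < F) P f = 1 ->
  (forall u, E ord0 u) ->
  (forall h u, 0 <= omega h u) ->
  (forall h u, E h u -> omega h u <= omega ord0 u) ->
  (forall u, omega ord0 u < omega_inf) ->
  (forall h u, ~~ E h u -> omega h u = omega_inf) ->
  (forall u, uniq (hs u)) ->
  (forall u h, (h \in hs u) = (h != ord0) && E h u) ->
  (forall u, sorted (fun a b => omega a u <= omega b u) (hs u)) ->
  (exists Xg, greedy_output P omega hs M Xg) /\
  (forall Xg, greedy_output P omega hs M Xg ->
     feasible M Xg /\
     forall Y, feasible M Y -> Gobj P omega hs Y / 2 <= Gobj P omega hs Xg).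
Proof.
move=> P_ge0 P_sum1 _ _ le_E _ _ _ hsE hs_sorted.
have le_base u : {in hs u, forall h, omega h u <= omega ord0 u}.
  by move=> h; rewrite hsE => /andP [_ /le_E].
split=> [|Xg outXg]; first exact: greedy_output_exists.
split=> [|Y]; first exact: greedy_reach_feasible outXg.1.
exact: greedy_output_half.
Qed.
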